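(* Let $X$ be a Banach space, $F:X\rightrightarrows Y$ a set-valued map with nonempty values, $\bar x\in X$ and $T\in\partial F(\bar x)$. Then $y^*\circ T\in\partial(y^*\circ F)(\bar x)$ for all $y^*\in K^+\setminus\{0\}$.
   Context: $Y$ is a real normed space with dual $Y^*$; $B(X,Y)$ is the space of bounded linear operators $X\to Y$; $B(x,\delta)$ is the open ball and $D_Y$ the closed unit ball. $K\subset Y$ is a pointed closed convex cone and $K^+=\{y^*\in Y^*: y^*(k)\ge0\ \forall k\in K\}$. $\operatorname{Epi}F(x)=F(x)+K$; for nonempty $A,B$, $e(A,B)=\sup_{a\in A}\inf_{b\in B}\|a-b\|$. The Fréchet subdifferential $\widehat\partial F(\bar x)$ is the set of all $T\in B(X,Y)$ such that for every $\varepsilon>0$ there is $\delta>0$ with $F(x)+K\subset F(\bar x)+K+T(x-\bar x)+\varepsilon\|x-\bar x\|D_Y$ for all $x\in B(\bar x,\delta)$. The limiting subdifferential $\partial F(\bar x)$ is the set of all $T\in B(X,Y)$ for which there exist a sequence $x_n\to\bar x$ with $e(\operatorname{Epi}F(x_n),\operatorname{Epi}F(\bar x))\to0$ and operators $T_n\in\widehat\partial F(x_n)$ with $T_n(x)\to T(x)$ for every $x\in X$. Both definitions are also applied to maps $G:X\rightrightarrows\mathbb R$ with $Y=\mathbb R$, $K=[0,\infty)$. For $y^*\in Y^*$, $y^*\circ F$ is $x\mapsto\{y^*(y):y\in F(x)\}$. *)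

From HB Require Import structures.
From mathcomp Require Import all_boot all_order all_algebra.
From mathcomp Require Import all_classical all_reals all_analysis.
Set Implicit Arguments. Unset Strict Implicit. Unset Printing Implicit Defensive.
Import Order.TTheory GRing.Theory Num.Theory.
Import numFieldNormedType.Exports.
Local Open Scope classical_set_scope.
Local Open Scope ring_scope.

Section Defs.
Context {R : realType}.

Definition bounded_linear {X Y : normedModType R} (T : X -> Y) : Prop :=
  (forall (a : R) (u v : X), T (a *: u + v) = a *: T u + T v) /\ continuous T.

Definition pointed_closed_convex_cone {Y : normedModType R} (K : set Y) : Prop :=
  [/\ K 0, closed K,
      (forall k1 k2, K k1 -> K k2 -> K (k1 + k2)),
      (forall (a : R) k, 0 <= a -> K k -> K (a *: k)) &
      (forall k, K k -> K (- k) -> k = 0)].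

Definition dual_cone {Y : normedModType R} (K : set Y) : set (Y -> R) :=
  [set ys | bounded_linear ys /\ forall k, K k -> (0 : R) <= ys k].

Definition Epi {X Y : normedModType R} (K : set Y) (F : X -> set Y) (x : X) : set Y :=
  [set y + k | y in F x & k in K].

Definition unit_ball {Y : normedModType R} : set Y := [set d | `|d| <= 1].

Definition excess {Y : normedModType R} (A B : set Y) : \bar R :=
  ereal_sup [set ereal_inf [set (`|a - b|)%:E | b in B] | a in A].

Definition frechet_subdiff {X Y : normedModType R} (K : set Y) (F : X -> set Y)
    (xb : X) : set (X -> Y) :=
  [set T | bounded_linear T /\
     forall eps : R, 0 < eps -> exists2 delta : R, 0 < delta &
       forall x : X, `|x - xb| < delta ->
         Epi K F x `<=`
         [set z + T (x - xb) + (eps * `|x - xb|) *: d | z in Epi K F xb & d in unit_ball]].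

Definition limiting_subdiff {X Y : normedModType R} (K : set Y) (F : X -> set Y)
    (xb : X) : set (X -> Y) :=
  [set T | bounded_linear T /\
     exists (xs : nat -> X) (Ts : nat -> X -> Y),
       [/\ xs @ \oo --> xb,
           (fun n => excess (Epi K F (xs n)) (Epi K F xb)) @ \oo --> 0%E,
           (forall n, frechet_subdiff K F (xs n) (Ts n)) &
           (forall x, (fun n => Ts n x) @ \oo --> T x)]].

Definition nonneg_cone : set R := [set r | 0 <= r].

Definition scal_comp {X Y : normedModType R} (ys : Y -> R) (F : X -> set Y) : X -> set R :=
  fun x => ys @` F x.

End Defs.

Set Warnings "-notation-overridden,-ambiguous-paths,-notation-incompatible-prefix".
From HB Require Import structures.
From mathcomp Require Import all_boot all_order all_algebra.
From mathcomp Require Import all_classical all_reals all_analysis.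
From mathcomp Require Import ring.
Import Order.TTheory GRing.Theory Num.Theory.
Import numFieldNormedType.Exports.
Local Open Scope classical_set_scope.
Local Open Scope ring_scope.

(* A functional y* in K^+ is Lipschitz with some constant M > 0 and nonnegative
   on K, so it maps F(x) + K into y*(F(x)) + [0, oo).  Hence it turns a Fréchet
   inclusion for T with error eps/M into one for y* o T with error eps, and it
   increases excesses between epigraph values by at most the factor M.  The
   sequence (x_n, T_n) witnessing T in the limiting subdifferential of F is
   therefore mapped to a sequence (x_n, y* o T_n) witnessing y* o T. *)

Section BoundedLinear.
Context {R : realType} {V W : normedModType R} {f : V -> W}.
Hypothesis fB : bounded_linear f.

Lemma bounded_linear0 : f 0 = 0.
Proof.
have := fB.1 1 0 0; rewrite !scale1r addr0 => f00.
by apply: (addrI (f 0)); rewrite addr0 -f00.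
Qed.

Lemma bounded_linearZ a u : f (a *: u) = a *: f u.
Proof. by have := fB.1 a u 0; rewrite addr0 bounded_linear0 addr0. Qed.

Lemma bounded_linearD u v : f (u + v) = f u + f v.
Proof. by have := fB.1 1 u v; rewrite !scale1r. Qed.

Lemma bounded_linearB u v : f (u - v) = f u - f v.
Proof. by rewrite bounded_linearD -scaleN1r bounded_linearZ scaleN1r. Qed.

Lemma bounded_linear_comp {U : normedModType R} {g : U -> V} :
  bounded_linear g -> bounded_linear (f \o g).
Proof.
move=> gB; split; first by move=> a u v /=; rewrite gB.1 fB.1.
by move=> x; apply: continuous_comp; [exact: gB.2 | exact: fB.2].
Qed.

(* Continuity at 0 gives a ball of radius e on which |f| < 1; rescaling any
   y into that ball yields the bound with constant 2/e. *)
Lemma bounded_linear_lipschitz : exists2 M : R, 0 < M & forall y, `|f y| <= M * `|y|.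
Proof.
have /cvgrPdist_lt/(_ 1 ltr01)/nbhs_ballP [e /= e0 ball_e] := fB.2 0.
rewrite bounded_linear0 in ball_e.
exists (2 / e); first by rewrite divr_gt0.
move=> y; have [->|y0] := eqVneq y 0; first by rewrite bounded_linear0 !normr0 mulr0.
have ny0 : 0 < `|y| by rewrite normr_gt0.
pose c := e / 2 / `|y|.
have c0 : 0 < c by rewrite !divr_gt0.
have : ball 0 e (c *: y).
  rewrite -ball_normE /ball_ /= sub0r normrN normrZ gtr0_norm // divfK ?gt_eqF //.
  by rewrite ltr_pdivrMr // ltr_pMr // ltr1n.
move/ball_e; rewrite sub0r normrN bounded_linearZ normrZ gtr0_norm // => fcy.
have : `|f y| < c^-1 by rewrite -(ltr_pM2l c0) mulfV ?gt_eqF.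
by move/ltW/le_trans; apply; rewrite /c !invf_div mulrC.
Qed.

End BoundedLinear.

Section Excess.
Context {R : realType} {Y Z : normedModType R}.

Lemma excess_ge0 (A B : set Y) : A !=set0 -> (0 <= excess A B)%E.
Proof.
move=> [a Aa]; apply: le_trans (ereal_sup_ubound _); last by exists a.
by apply: le_ereal_inf_tmp => _ [b _ <-]; rewrite lee_fin.
Qed.

Lemma excess_le_scale (M : R) (A B : set Y) (A' B' : set Z) : 0 < M ->
  (forall a', A' a' -> exists2 a, A a &
     forall b, B b -> exists2 b', B' b' & `|a' - b'| <= M * `|a - b|) ->
  (excess A' B' <= M%:E * excess A B)%E.
Proof.
move=> M0 partner; apply: ge_ereal_sup => _ [a' A'a' <-].
have [a Aa dist_le] := partner a' A'a'.
have inf_le : (ereal_inf [set (`|a' - b'|)%:E | b' in B']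
               <= M%:E * ereal_inf [set (`|a - b|)%:E | b in B])%E.
  rewrite -lee_pdivrMl //; apply: le_ereal_inf_tmp => _ [b Bb <-].
  rewrite lee_pdivrMl //; have [b' B'b' le_b'] := dist_le b Bb.
  by apply: ge_ereal_inf; exists (`|a' - b'|)%:E; [exists b' | rewrite -EFinM lee_fin].
apply: le_trans inf_le _; rewrite lee_pmul2l ?lte_fin //.
by apply: ereal_sup_ubound; exists a.
Qed.

End Excess.

Section ScalarComposition.
Context {R : realType} {X Y : normedModType R}.
Context {K : set Y} {F : X -> set Y} {ys : Y -> R}.
Hypotheses (K0 : K 0) (ysK : dual_cone K ys).

Lemma Epi_self {x y} : F x y -> Epi K F x y.
Proof. by move=> Fxy; exists y => //; exists 0; rewrite ?addr0. Qed.

Lemma Epi_scal_comp x z r : Epi K F x z -> 0 <= r ->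
  Epi nonneg_cone (scal_comp ys F) x (ys z + r).
Proof.
move=> [y Fxy [k Kk <-]] r0; exists (ys y); first by exists y.
exists (ys k + r); last by rewrite (bounded_linearD ysK.1) addrA.
by rewrite /nonneg_cone /= addr_ge0 //; apply: ysK.2.
Qed.

Lemma frechet_subdiff_scal_comp x0 T :
  frechet_subdiff K F x0 T ->
  frechet_subdiff nonneg_cone (scal_comp ys F) x0 (ys \o T).
Proof.
move=> [TB incl]; have [ysB _] := ysK.
have [M M0 ys_le] := bounded_linear_lipschitz ysB.
split; first exact: bounded_linear_comp.
move=> eps eps0; have [delta delta0 incl_eps] := incl (eps / M) (divr_gt0 eps0 M0).
exists delta => // x xdelta _ [_ [y Fxy <-] [r r0 <-]].
have [z Ez [d dB yE]] := incl_eps x xdelta y (Epi_self Fxy).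
exists (ys z + r); first exact: Epi_scal_comp.
exists (ys d / M).
  rewrite /unit_ball /= normrM normfV (gtr0_norm M0) ler_pdivrMr // mul1r.
  by apply: le_trans (ys_le d) _; rewrite ler_piMr // ltW.
rewrite /= -yE !(bounded_linearD ysB) (bounded_linearZ ysB) /GRing.scale /=.
by field; rewrite gt_eqF.
Qed.

Lemma excess_Epi_scal_comp (M : R) x x0 : 0 < M ->
  (forall y, `|ys y| <= M * `|y|) ->
  (excess (Epi nonneg_cone (scal_comp ys F) x) (Epi nonneg_cone (scal_comp ys F) x0)
   <= M%:E * excess (Epi K F x) (Epi K F x0))%E.
Proof.
move=> M0 ys_le; apply: excess_le_scale => // _ [_ [y Fxy <-] [r r0 <-]].
exists y; first exact: Epi_self.
move=> z Ez; exists (ys z + r); first exact: Epi_scal_comp.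
by rewrite opprD addrACA subrr addr0 -(bounded_linearB ysK.1).
Qed.

End ScalarComposition.

Theorem mainTheorem8 (R : realType) (X : completeNormedModType R)
    (Y : normedModType R) (K : set Y) (F : X -> set Y) (xb : X) (T : X -> Y) :
  pointed_closed_convex_cone K ->
  (forall x, F x !=set0) ->
  limiting_subdiff K F xb T ->
  forall ys : Y -> R, dual_cone K ys -> ys <> (fun _ => 0) ->
    limiting_subdiff (@nonneg_cone R) (scal_comp ys F) xb (ys \o T).
Proof.
move=> [K0 _ _ _ _] Fne [TB [xs [Ts [xs_cvg excess_cvg Ts_frechet Ts_cvg]]]] ys ysK _.
have [M M0 ys_le] := bounded_linear_lipschitz ysK.1.
split; first exact (bounded_linear_comp ysK.1 TB).
exists xs, (fun n => ys \o Ts n); split => //.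
- apply: (@squeeze_cvge _ _ _ _ (fun=> 0%E) _
     (fun n => M%:E * excess (Epi K F (xs n)) (Epi K F xb))%E); last 2 first.
  + exact: cvg_cst.
  + by rewrite -(mule0 M%:E); apply: cvgeZl.
  apply: nearW => n; apply/andP; split; last exact: excess_Epi_scal_comp.
  have [y Fy] := Fne (xs n).
  by apply: excess_ge0; exists (ys y + 0); apply: Epi_scal_comp; [exact: ysK | exact: Epi_self | by []].
- by move=> n; apply: frechet_subdiff_scal_comp (Ts_frechet n).
- by move=> x; apply: continuous_cvg; [exact: ysK.1.2 | exact: Ts_cvg].
Qed.
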